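(* For any $\mathcal R$-dioid $K$ and $n\ge1$, $\mathrm{Mat}_{n\times n}(K)\simeq K\otimes_{\mathcal R}\mathrm{Mat}_{n\times n}(\mathbb B)$.
   Context: An $\mathcal R$-dioid is a dioid in which every regular subset of its multiplicative monoid has a supremum $\sum A$ with $\sum(AB)=(\sum A)(\sum B)$ (equivalently a $*$-continuous Kleene algebra); an $\mathcal R$-morphism is a dioid morphism preserving suprema of regular sets. $\mathrm{Mat}_{n\times n}(K)$ is the ($*$-continuous) Kleene algebra of $n\times n$ matrices over $K$ with matrix sum, product and standard matrix star; $\mathbb B=\{0,1\}$ is the boolean Kleene algebra. For $\mathcal R$-dioids $K_1,K_2$, $K_1\otimes_{\mathcal R}K_2$ is their tensor product: an $\mathcal R$-dioid with $\mathcal R$-morphisms from $K_1$ and $K_2$ whose images commute elementwise, universal in that every pair of elementwise commuting $\mathcal R$-morphisms from $K_1,K_2$ into an $\mathcal R$-dioid factors uniquely through an $\mathcal R$-morphism from the tensor product. *)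

From HB Require Import structures.
From mathcomp Require Import all_boot all_order all_algebra.
Set Implicit Arguments. Unset Strict Implicit. Unset Printing Implicit Defensive.
Import GRing.Theory.
Local Open Scope ring_scope.

(* The boolean dioid B = ({0,1}, or, and, 0, 1).  (MathComp's own ring *)
(* structure on bool uses xor, so we use a fresh alias.)               *)
Definition bdioid := bool.
HB.instance Definition _ := Choice.on bdioid.

Lemma bd_addrA : associative (orb : bdioid -> bdioid -> bdioid).
Proof. by move=> [] [] []. Qed.
Lemma bd_addrC : commutative (orb : bdioid -> bdioid -> bdioid).
Proof. by move=> [] []. Qed.
Lemma bd_add0r : left_id (false : bdioid) orb.
Proof. by move=> []. Qed.
Lemma bd_mulrA : associative (andb : bdioid -> bdioid -> bdioid).
Proof. by move=> [] [] []. Qed.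
Lemma bd_mul1r : left_id (true : bdioid) andb.
Proof. by move=> []. Qed.
Lemma bd_mulr1 : right_id (true : bdioid) andb.
Proof. by move=> []. Qed.
Lemma bd_mulrDl : left_distributive (andb : bdioid -> bdioid -> bdioid) orb.
Proof. by move=> [] [] []. Qed.
Lemma bd_mulrDr : right_distributive (andb : bdioid -> bdioid -> bdioid) orb.
Proof. by move=> [] [] []. Qed.
Lemma bd_mul0r : left_zero (false : bdioid) andb.
Proof. by move=> []. Qed.
Lemma bd_mulr0 : right_zero (false : bdioid) andb.
Proof. by move=> []. Qed.

HB.instance Definition _ := GRing.isPzSemiRing.Build bdioid
  bd_addrA bd_addrC bd_add0r bd_mulrA bd_mul1r bd_mulr1
  bd_mulrDl bd_mulrDr bd_mul0r bd_mulr0.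

Definition idempotent_add (R : pzSemiRingType) := forall x : R, x + x = x.

Definition dle (R : pzSemiRingType) (x y : R) : Prop := x + y = y.

(* Regular subsets of the multiplicative monoid (R, *, 1): the smallest *)
(* family containing the finite subsets and closed under union, product *)
(* AB = {ab} and star A* (the submonoid generated by A).  We present    *)
(* them via regular expressions and their denotations.                  *)
Inductive rexp (R : Type) : Type :=
| RZero : rexp R
| RAtom : R -> rexp R
| RPlus : rexp R -> rexp R -> rexp R
| RTimes : rexp R -> rexp R -> rexp R
| RStar : rexp R -> rexp R.

Definition setprod (R : pzSemiRingType) (A B : R -> Prop) : R -> Prop :=
  fun z => exists x y, A x /\ B y /\ z = x * y.

Inductive setstar (R : pzSemiRingType) (A : R -> Prop) : R -> Prop :=
| setstar_one : setstar A 1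
| setstar_cons : forall x y, A x -> setstar A y -> setstar A (x * y).

Fixpoint lang (R : pzSemiRingType) (e : rexp R) : R -> Prop :=
  match e with
  | RZero => fun _ => False
  | RAtom a => fun x => x = a
  | RPlus e1 e2 => fun x => lang e1 x \/ lang e2 x
  | RTimes e1 e2 => setprod (lang e1) (lang e2)
  | RStar e1 => setstar (lang e1)
  end.

Definition regular (R : pzSemiRingType) (A : R -> Prop) : Prop :=
  exists e : rexp R, forall x, A x <-> lang e x.

Definition is_sup (R : pzSemiRingType) (A : R -> Prop) (s : R) : Prop :=
  (forall x, A x -> dle x s) /\
  (forall u, (forall x, A x -> dle x u) -> dle s u).

Definition Rdioid (R : pzSemiRingType) : Prop :=
  idempotent_add R /\
  (forall A : R -> Prop, regular A -> exists s, is_sup A s) /\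
  (forall (A B : R -> Prop) (sA sB : R), regular A -> regular B ->
     is_sup A sA -> is_sup B sB -> is_sup (setprod A B) (sA * sB)).

Definition dioid_morph (R S : pzSemiRingType) (f : R -> S) : Prop :=
  f 0 = 0 /\ (forall x y, f (x + y) = f x + f y) /\
  f 1 = 1 /\ (forall x y, f (x * y) = f x * f y).

Definition image (R S : Type) (f : R -> S) (A : R -> Prop) : S -> Prop :=
  fun y => exists x, A x /\ y = f x.

Definition Rmorph (R S : pzSemiRingType) (f : R -> S) : Prop :=
  dioid_morph f /\
  (forall (A : R -> Prop) (s : R), regular A -> is_sup A s ->
     is_sup (image f A) (f s)).

Definition is_Rtensor (K1 K2 T : pzSemiRingType)
    (i1 : K1 -> T) (i2 : K2 -> T) : Prop :=
  Rdioid T /\ Rmorph i1 /\ Rmorph i2 /\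
  (forall a b, i1 a * i2 b = i2 b * i1 a) /\
  (forall (S : pzSemiRingType) (f1 : K1 -> S) (f2 : K2 -> S),
     Rdioid S -> Rmorph f1 -> Rmorph f2 ->
     (forall a b, f1 a * f2 b = f2 b * f1 a) ->
     exists h : T -> S,
       [/\ Rmorph h, (forall a, h (i1 a) = f1 a), (forall b, h (i2 b) = f2 b)
         & (forall h' : T -> S, Rmorph h' ->
              (forall a, h' (i1 a) = f1 a) -> (forall b, h' (i2 b) = f2 b) ->
              forall t, h' t = h t)]).

From Pilot Require Import Defs.
From HB Require Import structures.
From mathcomp Require Import all_boot all_order all_algebra.
From Stdlib Require Import Classical_Prop FunctionalExtensionality PropExtensionality.
Set Implicit Arguments. Unset Strict Implicit. Unset Printing Implicit Defensive.
Import GRing.Theory.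
Local Open Scope ring_scope.

(* In an R-dioid, if [s] is the supremum of a regular set [X] then [a s b] is
   the supremum of [a X b] for all [a], [b]; such "context suprema" are stable
   under union, product and star.  For matrices they can be computed: writing
   [M = X + Y] with [X] the [k]-th row of [M], one has
   [M^* = X^* (Y X^* )^*], [X^* = 1 + (M_kk)^* X], and [Y X^*] has one
   nonzero row fewer than [M], so induction on rows expresses the supremum of
   any regular set of matrices through suprema of regular subsets of [K].
   Such an expression is transported by every morphism that preserves the
   latter: applied to the identity it makes [Mat_n(K)] an R-dioid, applied to
   [M |-> sum_ij f1(M_ij) f2(E_ij)] it makes this map an R-morphism, which is
   the unique factorization of the commuting pair [f1], [f2] since
   [M = sum_ij M_ij E_ij]. *)

Local Notation sing a := (fun x => x = a).
Local Notation union A B := (fun x => A x \/ B x).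

Lemma predext (T : Type) (A B : T -> Prop) : (forall x, A x <-> B x) -> A = B.
Proof.
by move=> AB; apply: functional_extensionality => x; apply: propositional_extensionality.
Qed.

Section DioidOrder.
Variable R : pzSemiRingType.
Implicit Types a b x y z u : R.

Lemma dle_trans x y z : dle x y -> dle y z -> dle x z.
Proof. by rewrite /dle => xy yz; rewrite -yz addrA xy. Qed.

Lemma dle_antisym x y : dle x y -> dle y x -> x = y.
Proof. by rewrite /dle => xy yx; rewrite -yx addrC xy. Qed.

Lemma is_sup_unique (X : R -> Prop) s t : is_sup X s -> is_sup X t -> s = t.
Proof.
by move=> [s_ub s_least] [t_ub t_least]; apply: dle_antisym; [apply: s_least | apply: t_least].
Qed.

Lemma dle0r u : dle 0 u.
Proof. by rewrite /dle add0r. Qed.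

Lemma dle_mul2lr a b x y : dle x y -> dle (a * x * b) (a * y * b).
Proof. by rewrite /dle => xy; rewrite -mulrDl -mulrDr xy. Qed.

Hypothesis idemR : idempotent_add R.

Lemma dle_refl x : dle x x.
Proof. exact: idemR. Qed.

Lemma dleD x y u : dle (x + y) u <-> dle x u /\ dle y u.
Proof.
rewrite /dle; split=> [xyu|[xu yu]]; last by rewrite -addrA yu xu.
split; rewrite -xyu; first by rewrite !addrA idemR.
by rewrite [x + y]addrC !addrA idemR.
Qed.

Lemma dle_addl x y : dle x (x + y).
Proof. by rewrite /dle addrA idemR. Qed.

Lemma dle_addr x y : dle y (x + y).
Proof. by rewrite addrC; apply: dle_addl. Qed.

Lemma dle_mul2 x x' y y' : dle x x' -> dle y y' -> dle (x * y) (x' * y').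
Proof.
move=> xx' yy'; apply: (@dle_trans _ (x' * y)).
  by have := dle_mul2lr 1 y xx'; rewrite !mul1r.
by have := dle_mul2lr x' 1 yy'; rewrite !mulr1.
Qed.

Lemma dle_sum (I : finType) (F : I -> R) u :
  dle (\sum_i F i) u <-> forall i, dle (F i) u.
Proof.
split=> [Fu i | Fu]; first by move: Fu; rewrite (bigD1 i) //= => /dleD[].
by elim/big_ind: _ => [|x y xu yu|i _]; [apply: dle0r | apply/dleD | apply: Fu].
Qed.

End DioidOrder.

Section ContextSup.
Variable R : pzSemiRingType.
Hypothesis idemR : idempotent_add R.
Implicit Types (X Y W : R -> Prop) (a b s t u w x y : R).

Definition ctx_ub X a b u := forall x, X x -> dle (a * x * b) u.

Definition is_csup X s := forall a b u, dle (a * s * b) u <-> ctx_ub X a b u.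

Lemma csup_sup X s : is_csup X s -> is_sup X s.
Proof.
move=> Xs; split=> [x Xx | u Xu].
  have := (Xs 1 1 s).1; rewrite mul1r mulr1 => /(_ (dle_refl idemR s) x Xx).
  by rewrite mul1r mulr1.
have := (Xs 1 1 u).2; rewrite mul1r mulr1; apply=> x Xx.
by rewrite mul1r mulr1; apply: Xu.
Qed.

Lemma csup_ub_eq X Y s :
  (forall a b u, ctx_ub X a b u <-> ctx_ub Y a b u) -> is_csup X s -> is_csup Y s.
Proof. by move=> XY Xs a b u; rewrite Xs. Qed.

Lemma csup0 : is_csup (fun _ => False) 0.
Proof. by move=> a b u; split=> [_ x [] | _]; rewrite mulr0 mul0r; apply: dle0r. Qed.

Lemma csup1 s : is_csup (sing s) s.
Proof. by move=> a b u; split=> [asbu x -> | ]; last apply. Qed.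

Lemma csupU X Y s t : is_csup X s -> is_csup Y t -> is_csup (union X Y) (s + t).
Proof.
move=> Xs Yt a b u; rewrite mulrDr mulrDl (dleD idemR) Xs Yt.
split=> [[Xu Yu] x [/Xu | /Yu] //| XYu].
by split=> x ?; apply: XYu; [left | right].
Qed.

Lemma csupM X Y s t : is_csup X s -> is_csup Y t -> is_csup (setprod X Y) (s * t).
Proof.
move=> Xs Yt a b u; rewrite mulrA -(mulrA (a * s)) Xs; split.
  move=> XYu _ [x [y [Xx [Yy ->]]]]; rewrite !mulrA.
  by apply: (Yt (a * x) b u).1 y Yy; rewrite -mulrA; apply: XYu.
move=> XYu x Xx; rewrite mulrA; apply/Yt => y Yy.
by rewrite -(mulrA a); apply: XYu; exists x, y.
Qed.

Fixpoint setpow X m : R -> Prop :=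
  if m is m'.+1 then setprod X (setpow X m') else sing 1.

Lemma setstarE X x : setstar X x <-> exists m, setpow X m x.
Proof.
split=> [|[m]]; first by elim=> [|y z Xy _ [m Xmz]]; [exists 0%N | exists m.+1, y, z].
elim: m x => [_ -> | m IHm _ [y [z [Xy [Xmz ->]]]]]; first exact: setstar_one.
by apply: setstar_cons => //; apply: IHm.
Qed.

Lemma csup_pow X s m : is_csup X s -> is_csup (setpow X m) (s ^+ m).
Proof.
move=> Xs; elim: m => [|m IHm]; first by rewrite expr0; apply: csup1.
by rewrite exprS; apply: csupM.
Qed.

Lemma ctx_ub_star X a b u :
  ctx_ub (setstar X) a b u <-> forall m, ctx_ub (setpow X m) a b u.
Proof.
split=> [Xu m x Xmx | Xu x /setstarE [m]]; last exact: Xu.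
by apply: Xu; apply/setstarE; exists m.
Qed.

Lemma csup_star_sup W w t :
  is_csup W w -> is_csup (setstar (sing w)) t -> is_csup (setstar W) t.
Proof.
move=> Ww wt; apply: csup_ub_eq wt => a b u; rewrite !ctx_ub_star.
by split=> Wu m; [apply/(csup_pow m Ww)/(csup_pow m (csup1 w)) |
                  apply/(csup_pow m (csup1 w))/(csup_pow m Ww)].
Qed.

Lemma csup_star0 : is_csup (setstar (sing 0)) 1.
Proof.
move=> a b u; split=> [abu x [|y z -> _] // | ]; last by apply; apply: setstar_one.
by rewrite mul0r mulr0 mul0r; apply: dle0r.
Qed.

Lemma setstar_in X x : X x -> setstar X x.
Proof. by move=> Xx; rewrite -[x]mulr1; apply: setstar_cons => //; apply: setstar_one. Qed.

Lemma setstar_mul X x y : setstar X x -> setstar X y -> setstar X (x * y).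
Proof.
elim=> [|z x' Xz _ IHx] Xy; first by rewrite mul1r.
by rewrite -mulrA; apply: setstar_cons => //; apply: IHx.
Qed.

Lemma setstar_sub X Y x : (forall y, X y -> setstar Y y) -> setstar X x -> setstar Y x.
Proof.
move=> XY; elim=> [|y z Xy _ Yz]; first exact: setstar_one.
by apply: setstar_mul => //; apply: XY.
Qed.

Lemma setstarU X Y :
  setstar (union X Y) = setprod (setstar X) (setstar (setprod Y (setstar X))).
Proof.
apply: predext => z; split.
  elim=> [|x z' [Xx | Yx] _ [p [q [Xp [YXq ->]]]]].
  - by exists 1, 1; rewrite mulr1; do !split; apply: setstar_one.
  - by exists (x * p), q; rewrite mulrA; split=> //; apply: setstar_cons.
  exists 1, (x * p * q); rewrite mul1r mulrA; split; first exact: setstar_one.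
  by split=> //; apply: setstar_cons => //; exists x, p.
have XU x : X x -> setstar (union X Y) x by move=> Xx; apply: setstar_in; left.
move=> [p [q [Xp [YXq ->]]]]; apply: setstar_mul; first exact: setstar_sub Xp.
apply: setstar_sub YXq => _ [y [x [Yy [Xx ->]]]].
by apply: setstar_mul; [apply: setstar_in; right | apply: setstar_sub Xx].
Qed.

Lemma setstar_pair_le x y v : setstar (union (sing x) (sing y)) v ->
  exists2 w, setstar (sing (x + y)) w & dle v w.
Proof.
elim=> [|c v' xyc _ [w xyw v'w]]; first by exists 1; [apply: setstar_one | apply: dle_refl].
exists ((x + y) * w); first exact: setstar_cons.
by apply: dle_mul2 => //; case: xyc => ->; [apply: dle_addl | apply: dle_addr].
Qed.

(* Right to left: expand [(x + y)^m] by distributivity into words over [x], [y]. *)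
Lemma ctx_ub_star_add x y a b u :
  ctx_ub (setstar (sing (x + y))) a b u <->
  ctx_ub (setstar (union (sing x) (sing y))) a b u.
Proof.
split=> [xyu v /setstar_pair_le [w /xyu wu vw] | xyu w].
  exact: dle_trans (dle_mul2lr a b vw) wu.
suff bound c : (forall v, setstar (union (sing x) (sing y)) v -> dle (a * (c * v) * b) u) ->
    setstar (sing (x + y)) w -> dle (a * (c * w) * b) u.
  by move=> /(bound 1); rewrite mul1r; apply=> v /xyu; rewrite mul1r.
move=> cu xyw; elim: xyw c cu => [|_ w' -> _ IHw] c cu; first by apply: cu; apply: setstar_one.
rewrite (mulrA c) mulrDr !mulrDl mulrDr mulrDl (dleD idemR).
by split; apply: IHw => v xyv; rewrite -(mulrA c); apply: cu;
  apply: setstar_cons => //; [left | right].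
Qed.

(* The Conway identity [(x + y)^* = x^* (y x^* )^*]. *)
Lemma csup_star_add x y tx t :
  is_csup (setstar (sing x)) tx -> is_csup (setstar (sing (y * tx))) t ->
  is_csup (setstar (sing (x + y))) (tx * t).
Proof.
move=> xtx yt; apply: csup_ub_eq (fun a b u => iff_sym (ctx_ub_star_add x y a b u)) _.
rewrite setstarU; apply: (csupM xtx); apply: csup_star_sup yt.
exact: csupM (csup1 y) xtx.
Qed.

End ContextSup.

Lemma regular_sing (R : pzSemiRingType) (a : R) : regular (sing a).
Proof. by exists (RAtom a). Qed.

Lemma regular_setprod (R : pzSemiRingType) (A B : R -> Prop) :
  regular A -> regular B -> regular (setprod A B).
Proof.
by move=> [e1 /predext ->] [e2 /predext ->]; exists (RTimes e1 e2).
Qed.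

(* Sandwiching [X] between singletons reduces context suprema to the axiom
   on suprema of products. *)
Lemma Rdioid_csup (R : pzSemiRingType) (X : R -> Prop) s :
  Rdioid R -> regular X -> is_sup X s -> is_csup X s.
Proof.
move=> [idemR [_ supM]] rX Xs a b u.
have sing_sup (c : R) : is_sup (sing c) c.
  by split=> [x -> | v]; [apply: dle_refl | apply].
have [aXb_ub aXb_least] := supM _ _ _ _
  (regular_setprod (regular_sing a) rX) (regular_sing b)
  (supM _ _ _ _ (regular_sing a) rX (sing_sup a) Xs) (sing_sup b).
split=> [asbu x Xx | Xu].
  by apply: dle_trans asbu; apply: aXb_ub; exists (a * x), b; split=> //; exists a, x.
by apply: aXb_least => _ [_ [_ [[_ [x [-> [Xx ->]]]] [-> ->]]]]; apply: Xu.
Qed.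

Section Image.
Variables (T U : Type) (f : T -> U).
Implicit Types A B : T -> Prop.

Lemma image_id A : Defs.image (fun x => x) A = A.
Proof. by apply: predext => x; split=> [[y [Ay ->]] | Ax] //; exists x. Qed.

Lemma image_comp (V : Type) (g : U -> V) A :
  Defs.image g (Defs.image f A) = Defs.image (fun x => g (f x)) A.
Proof.
apply: predext => z; split=> [[_ [[x [Ax ->]] ->]] | [x [Ax ->]]]; first by exists x.
by exists (f x); split=> //; exists x.
Qed.

Lemma image_sing a : Defs.image f (sing a) = sing (f a).
Proof. by apply: predext => y; split=> [[x [-> ->]] | ->] //; exists a. Qed.

Lemma image_empty : Defs.image f (fun _ => False) = (fun _ => False).
Proof. by apply: predext => y; split=> [[x []] | []]. Qed.

Lemma imageU A B : Defs.image f (union A B) = union (Defs.image f A) (Defs.image f B).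
Proof.
apply: predext => y; split=> [[x [[Ax | Bx] ->]] | [[x [Ax ->]] | [x [Bx ->]]]].
- by left; exists x.
- by right; exists x.
- by exists x; split=> //; left.
- by exists x; split=> //; right.
Qed.

End Image.

Section DioidMorphism.
Variables (R S : pzSemiRingType) (phi : R -> S).
Hypothesis phi_morph : dioid_morph phi.
Implicit Types A B : R -> Prop.

Lemma dioid_morph_dle x y : dle x y -> dle (phi x) (phi y).
Proof. by have [_ [phiD _]] := phi_morph; rewrite /dle -phiD => ->. Qed.

Lemma dioid_morph_sum (I : finType) (F : I -> R) : phi (\sum_i F i) = \sum_i phi (F i).
Proof. by have [phi0 [phiD _]] := phi_morph; apply: big_morph. Qed.

Lemma image_setprod A B :
  Defs.image phi (setprod A B) = setprod (Defs.image phi A) (Defs.image phi B).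
Proof.
have [_ [_ [_ phiM]]] := phi_morph; apply: predext => y; split.
  move=> [_ [[x [x' [Ax [Bx' ->]]]] ->]]; rewrite phiM.
  by exists (phi x), (phi x'); split; [exists x | split=> //; exists x'].
move=> [_ [_ [[x [Ax ->]] [[x' [Bx' ->]] ->]]]].
by exists (x * x'); rewrite phiM; split=> //; exists x, x'.
Qed.

Lemma image_setstar A : Defs.image phi (setstar A) = setstar (Defs.image phi A).
Proof.
have [_ [_ [phi1 phiM]]] := phi_morph; apply: predext => y; split.
  move=> [x [Ax ->]]; elim: Ax => [|x1 x2 Ax1 _ IHx].
    by rewrite phi1; apply: setstar_one.
  by rewrite phiM; apply: setstar_cons => //; exists x1.
elim=> [|_ y' [x [Ax ->]] _ [x' [Ax' ->]]]; first by exists 1; split; [apply: setstar_one|].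
by exists (x * x'); rewrite phiM; split=> //; apply: setstar_cons.
Qed.

Fixpoint rexp_map (e : rexp R) : rexp S :=
  match e with
  | RZero => RZero _
  | RAtom a => RAtom (phi a)
  | RPlus e1 e2 => RPlus (rexp_map e1) (rexp_map e2)
  | RTimes e1 e2 => RTimes (rexp_map e1) (rexp_map e2)
  | RStar e1 => RStar (rexp_map e1)
  end.

Lemma lang_rexp_map e : lang (rexp_map e) = Defs.image phi (lang e).
Proof.
elim: e => [|a|e1 IH1 e2 IH2|e1 IH1 e2 IH2|e1 IH1] /=.
- by rewrite image_empty.
- by rewrite image_sing.
- by rewrite imageU IH1 IH2.
- by rewrite image_setprod IH1 IH2.
- by rewrite image_setstar IH1.
Qed.

Lemma image_regular A : regular A -> regular (Defs.image phi A).
Proof. by move=> [e /predext ->]; exists (rexp_map e); rewrite lang_rexp_map. Qed.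

End DioidMorphism.

Lemma rmorph_dioid_morph (R S : pzSemiRingType) (f : {rmorphism R -> S}) : dioid_morph f.
Proof. by do !split; [apply: rmorph0 | apply: rmorphD | apply: rmorph1 | apply: rmorphM]. Qed.

Section MatrixEntries.
Variables (R : pzSemiRingType) (n : nat).
Implicit Types (A B : 'M[R]_n) (a : R).

Lemma mul_mxE A B i j : (A * B) i j = \sum_k A i k * B k j.
Proof. by rewrite -mulmxE mxE. Qed.

Lemma mul_scalar_mxE a A i j : (a%:M * A) i j = a * A i j.
Proof. by rewrite -mulmxE mul_scalar_mx mxE. Qed.

Lemma mul_mx_scalarE A a i j : (A * a%:M) i j = A i j * a.
Proof. by rewrite -mulmxE -diag_const_mx mul_mx_diag !mxE. Qed.

Lemma dle_mx A B : dle A B <-> forall i j, dle (A i j) (B i j).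
Proof.
rewrite /dle; split=> [AB i j | AB]; first by rewrite -[in RHS]AB mxE.
by apply/matrixP => i j; rewrite mxE AB.
Qed.

Lemma idempotent_add_mx : idempotent_add R -> idempotent_add 'M[R]_n.
Proof. by move=> idemR A; apply/matrixP => i j; rewrite mxE idemR. Qed.

Lemma scalar_csup (X : R -> Prop) s : idempotent_add R ->
  is_csup X s -> is_csup (Defs.image (@scalar_mx R n) X) s%:M.
Proof.
move=> idemR Xs A B U.
have entry a i j : (A * a%:M * B) i j = \sum_k A i k * a * B k j.
  by rewrite mul_mxE; apply: eq_bigr => k _; rewrite mul_mx_scalarE.
rewrite dle_mx; split=> [sU _ [x [Xx ->]] | XU i j].
  apply/dle_mx => i j; rewrite entry; apply/(dle_sum idemR) => k.
  by apply: (Xs _ _ _).1 x Xx; move: (sU i j); rewrite entry => /(dle_sum idemR).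
rewrite entry; apply/(dle_sum idemR) => k; apply/Xs => x Xx.
have /dle_mx /(_ i j) := XU _ (ex_intro _ x (conj Xx erefl)).
by rewrite entry => /(dle_sum idemR).
Qed.

End MatrixEntries.

Lemma map_mx_dioid_morph (R S : pzSemiRingType) (n : nat) (f : R -> S) :
  dioid_morph f -> dioid_morph (@map_mx R S f n n).
Proof.
move=> f_morph; have [f0 [fD [f1 fM]]] := f_morph.
split; first by apply/matrixP => i j; rewrite !mxE f0.
split; first by move=> A B; apply/matrixP => i j; rewrite !mxE fD.
split; first by apply/matrixP => i j; rewrite !mxE; case: (i == j); rewrite ?f1 ?f0.
move=> A B; apply/matrixP => i j; rewrite mxE !mul_mxE (dioid_morph_sum f_morph).
by apply: eq_bigr => k _; rewrite fM !mxE.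
Qed.

Section MatrixSup.
Variables (K : pzSemiRingType) (n : nat).
Local Notation MK := 'M[K]_n.
Implicit Types (A : MK -> Prop) (M U V : MK).

(* The morphisms along which the computed suprema of regular sets of matrices
   are transported: the identity and the map out of the tensor product. *)
Definition admissible (S : pzSemiRingType) (phi : MK -> S) :=
  [/\ idempotent_add S, dioid_morph phi &
      forall (X : K -> Prop) s, regular X -> is_sup X s ->
        is_csup (Defs.image (fun a => phi a%:M) X) (phi s%:M)].

Definition mx_csup A U :=
  forall (S : pzSemiRingType) (phi : MK -> S), admissible phi ->
    is_csup (Defs.image phi A) (phi U).

Lemma mx_csup_empty : mx_csup (fun _ => False) 0.
Proof.
by move=> S phi [_ [phi0 _] _]; rewrite phi0 image_empty; apply: csup0.
Qed.

Lemma mx_csup_sing M : mx_csup (sing M) M.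
Proof. by move=> S phi _; rewrite image_sing; apply: csup1. Qed.

Lemma mx_csupU A1 A2 U1 U2 :
  mx_csup A1 U1 -> mx_csup A2 U2 -> mx_csup (union A1 A2) (U1 + U2).
Proof.
move=> AU1 AU2 S phi adm; have [idemS [_ [phiD _]] _] := adm.
by rewrite imageU phiD; apply: (csupU idemS (AU1 _ _ adm) (AU2 _ _ adm)).
Qed.

Lemma mx_csupM A1 A2 U1 U2 :
  mx_csup A1 U1 -> mx_csup A2 U2 -> mx_csup (setprod A1 A2) (U1 * U2).
Proof.
move=> AU1 AU2 S phi adm; have [_ phi_morph _] := adm; have [_ [_ [_ phiM]]] := phi_morph.
by rewrite (image_setprod phi_morph) phiM; apply: csupM (AU1 _ _ adm) (AU2 _ _ adm).
Qed.

Lemma mx_csup_star A U V :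
  mx_csup A U -> mx_csup (setstar (sing U)) V -> mx_csup (setstar A) V.
Proof.
move=> AU UV S phi adm; have [_ phi_morph _] := adm.
have := UV _ _ adm; rewrite !(image_setstar phi_morph) image_sing.
exact: csup_star_sup (AU _ _ adm).
Qed.

Definition keep_row k M : MK := \matrix_(i, j) (if i == k then M i j else 0).
Definition drop_row k M : MK := \matrix_(i, j) (if i == k then 0 else M i j).

Lemma keep_drop_row k M : keep_row k M + drop_row k M = M.
Proof.
by apply/matrixP => i j; rewrite !mxE; case: (i == k); rewrite ?addr0 ?add0r.
Qed.

Lemma keep_row_scalar_keep_row k M c :
  keep_row k M * (c%:M * keep_row k M) = (M k k * c)%:M * keep_row k M.
Proof.
apply/matrixP => i j; rewrite mul_scalar_mxE mul_mxE.
under eq_bigr => l _ do rewrite mul_scalar_mxE.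
rewrite !mxE; case: (eqVneq i k) => [-> | ik]; last first.
  by rewrite mulr0 big1 // => l _; rewrite mxE (negPf ik) mul0r.
rewrite (bigD1 k) //= big1 ?addr0 => [|l lk]; first by rewrite !mxE !eqxx mulrA.
by rewrite [keep_row _ _ l j]mxE (negPf lk) !mulr0.
Qed.

(* By [keep_row_scalar_keep_row], the positive powers of [X := keep_row k M]
   are the [M_kk^m X]. *)
Lemma setstar_keep_row k M :
  setstar (sing (keep_row k M)) =
  union (sing 1)
        (setprod (Defs.image (@scalar_mx K n) (setstar (sing (M k k)))) (sing (keep_row k M))).
Proof.
set X := keep_row k M; apply: predext => z; split.
  elim=> [|_ z' -> _ [-> | [_ [_ [[c [c_star ->]] [-> ->]]]]]]; first by left.
    right; exists 1%:M, X; rewrite mulr1 rmorph1 mul1r.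
    by split=> //; exists 1; split=> //; apply: setstar_one.
  right; exists (M k k * c)%:M, X; rewrite keep_row_scalar_keep_row.
  by split=> //; exists (M k k * c); split=> //; apply: setstar_cons.
move=> [-> | [_ [_ [[c [c_star ->]] [-> ->]]]]]; first exact: setstar_one.
elim: c_star => [|_ c' -> _ IHc]; first by rewrite rmorph1 mul1r; apply: setstar_in.
by rewrite -keep_row_scalar_keep_row; apply: setstar_cons.
Qed.

Lemma mx_csup_star_keep_row k M s :
  is_sup (setstar (sing (M k k))) s ->
  mx_csup (setstar (sing (keep_row k M))) (1 + s%:M * keep_row k M).
Proof.
move=> star_s S phi [idemS phi_morph scalar_sup]; have [_ [phiD [phi1 phiM]]] := phi_morph.
rewrite setstar_keep_row imageU (image_setprod phi_morph) image_comp !image_sing.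
rewrite phiD phiM phi1; apply: (csupU idemS (csup1 1)).
apply: csupM (csup1 _); apply: scalar_sup star_s.
by exists (RStar (RAtom (M k k))).
Qed.

Hypothesis K_Rdioid : Rdioid K.

(* Induction on the set [r] of possibly nonzero rows: [M = X + Y] with [X] the
   row [k] of [M], and [(X + Y)^* = X^* (Y X^* )^*] where [Y X^*] has no row [k]. *)
Lemma mx_csup_star_rows (r : seq 'I_n) M :
  (forall i j, i \notin r -> M i j = 0) -> exists U, mx_csup (setstar (sing M)) U.
Proof.
elim: r M => [|k r IHr] M M_rows.
  have -> : M = 0 by apply/matrixP => i j; rewrite mxE M_rows.
  exists 1 => S phi [_ phi_morph _]; have [phi0 [_ [phi1 _]]] := phi_morph.
  by rewrite (image_setstar phi_morph) image_sing phi0 phi1; apply: csup_star0.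
have [s star_s] : exists s, is_sup (setstar (sing (M k k))) s.
  by have [_ [supK _]] := K_Rdioid; apply: supK; exists (RStar (RAtom (M k k))).
set X := keep_row k M; set Y := drop_row k M; set TX := 1 + s%:M * X.
have [UZ YTX_UZ] : exists UZ, mx_csup (setstar (sing (Y * TX))) UZ.
  apply: IHr => i j ir; rewrite mul_mxE big1 // => l _; rewrite !mxE.
  case: (eqVneq i k) => [_ | ik]; first by rewrite mul0r.
  by rewrite M_rows ?mul0r // in_cons negb_or ik.
exists (TX * UZ) => S phi adm; have [idemS phi_morph _] := adm.
have [_ [phiD [_ phiM]]] := phi_morph.
rewrite -(keep_drop_row k M) (image_setstar phi_morph) image_sing phiD phiM.
apply: (csup_star_add idemS).
  by have := mx_csup_star_keep_row star_s adm; rewrite (image_setstar phi_morph) image_sing.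
by have := YTX_UZ _ _ adm; rewrite (image_setstar phi_morph) image_sing phiM.
Qed.

Lemma regular_mx_csup A : regular A -> exists U, mx_csup A U.
Proof.
move=> [e /predext ->]; elim: e => [|M|e1 [U1 ?] e2 [U2 ?]|e1 [U1 ?] e2 [U2 ?]|e [U eU]].
- by exists 0; apply: mx_csup_empty.
- by exists M; apply: mx_csup_sing.
- by exists (U1 + U2); apply: mx_csupU.
- by exists (U1 * U2); apply: mx_csupM.
have [V UV] : exists V, mx_csup (setstar (sing U)) V.
  by apply: (@mx_csup_star_rows (enum 'I_n)) => i j; rewrite mem_enum.
by exists V; apply: mx_csup_star eU UV.
Qed.

Lemma admissible_id : admissible (fun M : MK => M).
Proof.
have [idemK _] := K_Rdioid; split; first exact: idempotent_add_mx.
  by split; last split; last split.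
by move=> X s rX Xs; apply: scalar_csup (Rdioid_csup K_Rdioid rX Xs).
Qed.

Lemma mx_csup_csup A U : mx_csup A U -> is_csup A U.
Proof. by move=> /(_ _ _ admissible_id); rewrite image_id. Qed.

Lemma regular_mx_sup A s : regular A -> is_sup A s -> mx_csup A s.
Proof.
have [idemK _] := K_Rdioid; move=> /regular_mx_csup [U AU] As.
suff -> : s = U by [].
exact: is_sup_unique As (csup_sup (@idempotent_add_mx _ n idemK) (mx_csup_csup AU)).
Qed.

Lemma Rdioid_mx : Rdioid MK.
Proof.
have [idemK _] := K_Rdioid; have idemMK := @idempotent_add_mx _ n idemK.
split=> //; split=> [A /regular_mx_csup [U /mx_csup_csup AU] | A B sA sB rA rB As Bs].
  by exists U; apply: csup_sup AU.
apply: (csup_sup idemMK); apply: mx_csup_csup.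
exact: mx_csupM (regular_mx_sup rA As) (regular_mx_sup rB Bs).
Qed.

Lemma Rmorph_scalar_mx : Rmorph (@scalar_mx K n).
Proof.
have [idemK _] := K_Rdioid; split; first exact: rmorph_dioid_morph.
move=> X s rX Xs; apply: (csup_sup (@idempotent_add_mx _ n idemK)).
exact: scalar_csup (Rdioid_csup K_Rdioid rX Xs).
Qed.

End MatrixSup.

Section BooleanMatrices.
Variables (K : pzSemiRingType) (n : nat).
Hypothesis idemK : idempotent_add K.

Definition of_bool (b : bdioid) : K := if b then 1 else 0.

Definition mx_of_bool (B : 'M[bdioid]_n) : 'M[K]_n := map_mx of_bool B.

Lemma of_bool_dioid_morph : dioid_morph of_bool.
Proof.
split=> //; split; first by move=> [] [] /=; rewrite ?addr0 ?add0r ?idemK.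
by split=> // [] [] [] /=; rewrite ?mulr1 ?mulr0.
Qed.

(* Otherwise the matrix whose only [false] entry is at [(i, j)] bounds [A]. *)
Lemma bool_mx_sup_witness (A : 'M[bdioid]_n -> Prop) s i j :
  is_sup A s -> s i j -> exists2 a, A a & a i j.
Proof.
move=> [_ s_least] sij; apply: NNPP => no_witness.
pose u : 'M[bdioid]_n := \matrix_(k, l) ~~ ((k == i) && (l == j)).
have /dle_mx /(_ i j) : dle s u.
  apply: s_least => a Aa; apply/dle_mx => k l; rewrite /dle mxE.
  case: (eqVneq k i) => [-> | _]; case: (eqVneq l j) => [-> | _] //=; try by case: (a _ _).
  by case aij: (a i j) => //; case: no_witness; exists a.
by rewrite /dle mxE !eqxx sij.
Qed.

Lemma Rmorph_mx_of_bool : Rmorph mx_of_bool.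
Proof.
have morph : dioid_morph mx_of_bool := map_mx_dioid_morph n of_bool_dioid_morph.
split=> // A s _ As; split=> [_ [a [Aa ->]] | u u_ub].
  exact: (dioid_morph_dle morph (As.1 a Aa)).
apply/dle_mx => i j; rewrite mxE; case sij: (s i j); last exact: dle0r.
have [a Aa aij] := bool_mx_sup_witness As sij.
by have /dle_mx /(_ i j) := u_ub _ (ex_intro _ a (conj Aa erefl)); rewrite mxE aij.
Qed.

Lemma mx_of_bool_delta i j : mx_of_bool (delta_mx i j) = delta_mx i j.
Proof. by apply/matrixP => k l; rewrite !mxE; case: (_ && _). Qed.

Lemma scalar_mx_of_bool_comm a B : a%:M * mx_of_bool B = mx_of_bool B * a%:M.
Proof.
apply/matrixP => i j; rewrite mul_scalar_mxE mul_mx_scalarE mxE.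
by case: (B i j); rewrite /= ?mulr1 ?mul1r ?mulr0 ?mul0r.
Qed.

End BooleanMatrices.

Arguments mx_of_bool {K n} B.

Section UniversalProperty.
Variables (K : pzSemiRingType) (n : nat) (S : pzSemiRingType).
Variables (f1 : K -> S) (f2 : 'M[bdioid]_n -> S).
Hypotheses (f1_morph : dioid_morph f1) (f2_morph : dioid_morph f2).
Hypothesis f12_comm : forall a B, f1 a * f2 B = f2 B * f1 a.

Local Notation unit_img i j := (f2 (delta_mx i j)).

Definition tensor_lift (M : 'M[K]_n) : S :=
  \sum_i \sum_j f1 (M i j) * unit_img i j.

Lemma unit_img_mul a b i j k l :
  f1 a * unit_img i j * (f1 b * unit_img k l) =
  if j == k then f1 a * f1 b * unit_img i l else 0.
Proof.
have [f2_0 [_ [_ f2M]]] := f2_morph.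
rewrite mulrA -(mulrA (f1 a)) -f12_comm mulrA -mulrA -f2M -mulmxE mul_delta_mx_cond.
by case: (j == k); rewrite ?mulr1n ?mulr0n ?f2_0 ?mulr0.
Qed.

Lemma tensor_lift_scalar a : tensor_lift a%:M = f1 a.
Proof.
have [f1_0 _] := f1_morph; have [_ [_ [f2_1 _]]] := f2_morph.
rewrite /tensor_lift -[RHS]mulr1 -f2_1.
have -> : (1 : 'M[bdioid]_n) = 1%:M by rewrite rmorph1.
rewrite [in RHS]scalar_mx_sum_delta (dioid_morph_sum f2_morph) mulr_sumr.
apply: eq_bigr => i _.
rewrite (bigD1 i) //= big1 ?addr0 => [|j ij]; first by rewrite mxE eqxx mulr1n scale1r.
by rewrite mxE eq_sym (negPf ij) mulr0n f1_0 mul0r.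
Qed.

Lemma tensor_lift_mul A B : tensor_lift (A * B) = tensor_lift A * tensor_lift B.
Proof.
have [_ [_ [_ f1M]]] := f1_morph.
rewrite /tensor_lift mulr_suml; apply: eq_bigr => i _.
transitivity (\sum_j \sum_l f1 (A i j) * f1 (B j l) * unit_img i l).
  rewrite exchange_big; apply: eq_bigr => l _.
  rewrite mul_mxE (dioid_morph_sum f1_morph) mulr_suml.
  by apply: eq_bigr => j _; rewrite f1M.
rewrite mulr_suml; apply: eq_bigr => j _.
rewrite mulr_sumr [RHS](bigD1 j) //= [X in _ + X]big1 ?addr0 => [|k jk].
  by rewrite mulr_sumr; apply: eq_bigr => l _; rewrite unit_img_mul eqxx.
by rewrite mulr_sumr big1 // => l _; rewrite unit_img_mul eq_sym (negPf jk).
Qed.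

Lemma tensor_lift_dioid_morph : dioid_morph tensor_lift.
Proof.
have [f1_0 [f1D [f1_1 _]]] := f1_morph.
split.
  by rewrite /tensor_lift big1 // => i _; rewrite big1 // => j _; rewrite mxE f1_0 mul0r.
split.
  move=> A B; rewrite /tensor_lift -big_split; apply: eq_bigr => i _.
  by rewrite -big_split; apply: eq_bigr => j _; rewrite mxE f1D mulrDl.
split; last exact: tensor_lift_mul.
by rewrite -f1_1 -tensor_lift_scalar.
Qed.

Lemma tensor_lift_bool B : tensor_lift (mx_of_bool B) = f2 B.
Proof.
have [f1_0 [_ [f1_1 _]]] := f1_morph; have [f2_0 _] := f2_morph.
rewrite [in RHS](matrix_sum_delta B) !(dioid_morph_sum f2_morph); apply: eq_bigr => i _.
rewrite (dioid_morph_sum f2_morph); apply: eq_bigr => j _; rewrite mxE.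
by case: (B i j); rewrite /= ?f1_1 ?f1_0 ?mul1r ?mul0r ?scale1r ?scale0r ?f2_0.
Qed.

Lemma tensor_lift_unique (h : 'M[K]_n -> S) : dioid_morph h ->
  (forall a, h a%:M = f1 a) -> (forall B, h (mx_of_bool B) = f2 B) -> h =1 tensor_lift.
Proof.
move=> h_morph h_scalar h_bool M; have [_ [_ [_ hM]]] := h_morph.
rewrite {1}[M]matrix_sum_delta !(dioid_morph_sum h_morph); apply: eq_bigr => i _.
rewrite (dioid_morph_sum h_morph); apply: eq_bigr => j _.
by rewrite -mul_scalar_mx -(mx_of_bool_delta K) mulmxE hM h_scalar h_bool.
Qed.

Hypotheses (S_Rdioid : Rdioid S) (f1_Rmorph : Rmorph f1).

Lemma admissible_tensor_lift : admissible tensor_lift.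
Proof.
have [idemS _] := S_Rdioid; split=> //; first exact: tensor_lift_dioid_morph.
move=> X s rX Xs.
have -> : (fun a => tensor_lift a%:M) = f1.
  by apply: functional_extensionality => a; apply: tensor_lift_scalar.
rewrite tensor_lift_scalar.
exact: Rdioid_csup S_Rdioid (image_regular f1_morph rX) (f1_Rmorph.2 X s rX Xs).
Qed.

Lemma Rmorph_tensor_lift : Rdioid K -> Rmorph tensor_lift.
Proof.
move=> K_Rdioid; have [idemS _] := S_Rdioid.
split=> [|A s rA As]; first exact: tensor_lift_dioid_morph.
exact: (csup_sup idemS (regular_mx_sup K_Rdioid rA As admissible_tensor_lift)).
Qed.

End UniversalProperty.

Theorem proposition4 (K : pzSemiRingType) (n : nat) :
  Rdioid K -> (0 < n)%N ->
  exists (i1 : K -> 'M[K]_n) (i2 : 'M[bdioid]_n -> 'M[K]_n),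
    is_Rtensor i1 i2.
Proof.
move=> K_Rdioid _; have [idemK _] := K_Rdioid.
exists (@scalar_mx K n), mx_of_bool.
split; first exact: Rdioid_mx K_Rdioid.
split; first exact: Rmorph_scalar_mx K_Rdioid.
split; first exact: Rmorph_mx_of_bool idemK.
split; first exact: scalar_mx_of_bool_comm.
move=> S f1 f2 S_Rdioid f1_Rmorph [f2_morph _] f12_comm; have [f1_morph _] := f1_Rmorph.
exists (tensor_lift f1 f2); split.
- exact: Rmorph_tensor_lift f1_morph f2_morph f12_comm S_Rdioid f1_Rmorph K_Rdioid.
- exact: tensor_lift_scalar f1_morph f2_morph.
- exact: tensor_lift_bool f1_morph f2_morph.
- by move=> h [h_morph _]; apply: tensor_lift_unique.
Qed.
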